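(* Let $D\subseteq\mathbb{R}^n$ be nonempty, convex, closed and bounded, and let $f:\mathbb{R}^n\to\mathbb{R}$ be continuously differentiable. Let $\{x^k\}$ be generated by Method (CGMS) (described in the context) and suppose the method does not terminate, so that $\{x^k\}$ is infinite. Then: (i) the sequence $\{x^k\}$ has a limit point which belongs to $D^0$; (ii) if, in addition, $f$ is pseudo-convex on $D$, then all limit points of $\{x^k\}$ belong to $D^*$, and $\lim_{k\to\infty} f(x^k)=f^*$.
   Context: Notation: $f'(x)$ is the gradient of $f$; $\langle\cdot,\cdot\rangle$ the Euclidean inner product. The problem is $\min_{x\in D} f(x)$; $f^*=\inf_{x\in D}f(x)$ and $D^*$ is its solution set. $D^0$ is the set of stationary points, i.e. of $x^*\in D$ with $\langle f'(x^* ),x-x^*\rangle\ge 0$ for all $x\in D$. $Z(x)$ denotes the set of minimizers of $y\mapsto\langle f'(x),y\rangle$ over $y\in D$. A differentiable $\varphi$ is pseudo-convex on $D$ if for all $x,y\in D$, $\langle\varphi'(x),y-x\rangle\ge0$ implies $\varphi(y)\ge\varphi(x)$. Method (CGMS): Choose $x^0\in D$, $\beta\in(0,1)$, and a sequence of numbers $\tau_l\in(0,1)$, $l=0,1,\dots$, with $\tau_l\to0$. Set $k=0$, $l=0$ and choose $\lambda_0\in(0,\tau_0]$. Iteration $k$: (Step 1) find $y^k\in Z(x^k)$, set $d^k=y^k-x^k$; if $\langle f'(x^k),d^k\rangle=0$, stop. (Step 2) Set $x^{k+1}=x^k+\lambda_k d^k$. If $f(x^{k+1})\le f(x^k)+\beta\lambda_k\langle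 f'(x^k),d^k\rangle$, choose any $\lambda_{k+1}\in[\lambda_k,\tau_l]$ (with $l$ unchanged). Otherwise set $\lambda'_{k+1}=\min\{\lambda_k,\tau_{l+1}\}$, replace $l$ by $l+1$, and choose any $\lambda_{k+1}\in(0,\lambda'_{k+1}]$. Set $k=k+1$ and return to Step 1. *)

From Stdlib Require Import Reals.
From mathcomp Require Import ssreflect ssrfun ssrbool eqtype ssrnat seq fintype bigop.

Set Implicit Arguments. Unset Strict Implicit. Unset Printing Implicit Defensive.

Open Scope R_scope.

Definition vec (n : nat) := 'I_n -> R.

Definition vadd {n} (x y : vec n) : vec n := fun i => x i + y i.
Definition vsub {n} (x y : vec n) : vec n := fun i => x i - y i.
Definition vscale {n} (a : R) (x : vec n) : vec n := fun i => a * x i.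

Definition inner {n} (x y : vec n) : R := \big[Rplus/0]_(i < n) (x i * y i).
Definition vnorm {n} (x : vec n) : R := sqrt (inner x x).

Definition vconvex {n} (D : vec n -> Prop) : Prop :=
  forall x y t, D x -> D y -> 0 <= t <= 1 -> D (vadd x (vscale t (vsub y x))).

Definition vclosed {n} (D : vec n -> Prop) : Prop :=
  forall x, ~ D x -> exists eps, 0 < eps /\ forall y, vnorm (vsub y x) < eps -> ~ D y.

Definition vbounded {n} (D : vec n -> Prop) : Prop :=
  exists M, forall x, D x -> vnorm x <= M.

Definition has_gradient {n} (f : vec n -> R) (g : vec n -> vec n) : Prop :=
  forall x eps, 0 < eps -> exists delta, 0 < delta /\
    forall y, vnorm (vsub y x) < delta ->
      Rabs (f y - f x - inner (g x) (vsub y x)) <= eps * vnorm (vsub y x).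

Definition continuous_map {n} (g : vec n -> vec n) : Prop :=
  forall x eps, 0 < eps -> exists delta, 0 < delta /\
    forall y, vnorm (vsub y x) < delta -> vnorm (vsub (g y) (g x)) < eps.

Definition C1_with_gradient {n} (f : vec n -> R) (f' : vec n -> vec n) : Prop :=
  has_gradient f f' /\ continuous_map f'.

Definition in_Z {n} (D : vec n -> Prop) (f' : vec n -> vec n) (x y : vec n) : Prop :=
  D y /\ forall z, D z -> inner (f' x) y <= inner (f' x) z.

(* D^0: stationary points *)
Definition stationary {n} (D : vec n -> Prop) (f' : vec n -> vec n) (xs : vec n) : Prop :=
  D xs /\ forall z, D z -> 0 <= inner (f' xs) (vsub z xs).

(* D^*: solution set *)
Definition minimizer {n} (D : vec n -> Prop) (f : vec n -> R) (xs : vec n) : Prop :=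
  D xs /\ forall z, D z -> f xs <= f z.

Definition is_inf_on {n} (D : vec n -> Prop) (f : vec n -> R) (m : R) : Prop :=
  (forall z, D z -> m <= f z) /\
  (forall m', (forall z, D z -> m' <= f z) -> m' <= m).

Definition pseudo_convex_on {n} (D : vec n -> Prop) (phi : vec n -> R)
    (phi' : vec n -> vec n) : Prop :=
  forall x y, D x -> D y -> 0 <= inner (phi' x) (vsub y x) -> phi x <= phi y.

Definition limit_point {n} (x : nat -> vec n) (xs : vec n) : Prop :=
  forall eps, 0 < eps -> forall N, exists k, (N <= k)%nat /\ vnorm (vsub (x k) xs) < eps.

(* The sequences (x^k, y^k, lambda_k, l_k) are a non-terminating run of Method CGMS
   with parameters beta, tau; lidx k is the value of the counter l at the start of
   iteration k. *)
Definition CGMS_run {n} (D : vec n -> Prop) (f : vec n -> R) (f' : vec n -> vec n)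
    (beta : R) (tau : nat -> R)
    (x y : nat -> vec n) (lam : nat -> R) (lidx : nat -> nat) : Prop :=
  D (x 0%nat) /\ lidx 0%nat = 0%nat /\ 0 < lam 0%nat <= tau 0%nat /\
  forall k,
    let d := vsub (y k) (x k) in
    in_Z D f' (x k) (y k) /\
    inner (f' (x k)) d <> 0 /\
    x (S k) = vadd (x k) (vscale (lam k) d) /\
    (f (x (S k)) <= f (x k) + beta * lam k * inner (f' (x k)) d ->
       lidx (S k) = lidx k /\ lam k <= lam (S k) <= tau (lidx k)) /\
    (~ (f (x (S k)) <= f (x k) + beta * lam k * inner (f' (x k)) d) ->
       lidx (S k) = S (lidx k) /\
       0 < lam (S k) <= Rmin (lam k) (tau (S (lidx k)))).

(* Let theta_k = <f'(x^k), y^k - x^k> < 0; a point where -theta is small is nearly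
   stationary.  If the counter l_k stays bounded, the Armijo test eventually always
   succeeds with step sizes bounded away from 0, and since f is bounded below on the
   compact set D the Armijo decreases force theta_k -> 0.  If l_k is unbounded, then
   lambda_k <= tau_(l_k) -> 0 and the test fails infinitely often; by the mean value
   theorem and the uniform continuity of f' on D, a failure with a small step forces
   -theta_k to be small.  In both cases theta_k -> 0 along a subsequence, whose limit
   points are stationary because the stationarity gap is continuous.
   Under pseudo-convexity stationary points are minimizers, and by compactness nearly
   stationary points have nearly optimal value; this bounds f(x^k) from above in the
   first case, and in the second case once a late failure has occurred, since later
   steps either decrease f or start from a near-optimal point and are short. *)

Set Warnings "-notation-overridden".
Set Warnings "-redundant-canonical-projection".
From HB Require Import structures.
From Stdlib Require Import Reals Lra Rtopology FunctionalExtensionality ClassicalEpsilon Classical.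
From mathcomp Require Import ssreflect ssrfun ssrbool eqtype ssrnat fintype bigop zify.

Open Scope R_scope.

HB.instance Definition _ := Monoid.isComLaw.Build R 0 Rplus
  (fun a b c => esym (Rplus_assoc a b c)) Rplus_comm Rplus_0_l.

Lemma sumR_ge0 n (P : pred 'I_n) (F : 'I_n -> R) :
  (forall i, 0 <= F i) -> 0 <= \big[Rplus/0]_(i < n | P i) F i.
Proof. by move=> H; apply: (big_ind (fun a => 0 <= a)) => [|a b|i _]; [lra|lra|]. Qed.

Section VectorAlgebra.
Context {n : nat}.
Implicit Types u v w : vec n.

Lemma inner_sym u v : inner u v = inner v u.
Proof. by apply: eq_bigr => i _; rewrite Rmult_comm. Qed.

Lemma inner_addl u v w : inner (vadd u v) w = inner u w + inner v w.
Proof. by rewrite /inner -big_split; apply: eq_bigr => i _; rewrite /vadd Rmult_plus_distr_r. Qed.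

Lemma inner_scalel a u w : inner (vscale a u) w = a * inner u w.
Proof.
rewrite /inner (big_endo (Rmult a)) => [|b c|]; try ring.
by apply: eq_bigr => i _; rewrite /vscale Rmult_assoc.
Qed.

Lemma vsubE u v : vsub u v = vadd u (vscale (-1) v).
Proof. by apply: functional_extensionality => i; rewrite /vsub /vadd /vscale; ring. Qed.

Lemma inner_subl u v w : inner (vsub u v) w = inner u w - inner v w.
Proof. by rewrite vsubE inner_addl inner_scalel; ring. Qed.

Lemma inner_addr u v w : inner w (vadd u v) = inner w u + inner w v.
Proof. by rewrite inner_sym inner_addl !(inner_sym w). Qed.

Lemma inner_subr u v w : inner w (vsub u v) = inner w u - inner w v.
Proof. by rewrite inner_sym inner_subl !(inner_sym w). Qed.

Lemma inner_scaler a u w : inner w (vscale a u) = a * inner w u.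
Proof. by rewrite inner_sym inner_scalel inner_sym. Qed.

Lemma inner_ge0 u : 0 <= inner u u.
Proof. by apply: sumR_ge0 => i; apply: Rle_0_sqr. Qed.

Lemma sqr_coord_le u i : u i * u i <= inner u u.
Proof.
rewrite /inner (bigD1 i) //=.
rewrite -{1}(Rplus_0_r (u i * u i)); apply: Rplus_le_compat_l.
exact: (@sumR_ge0 n (fun j => j != i) (fun j => u j * u j) (fun j => Rle_0_sqr (u j))).
Qed.

Lemma vnorm_ge0 u : 0 <= vnorm u.
Proof. exact: sqrt_pos. Qed.

Lemma vnorm_sqr u : vnorm u * vnorm u = inner u u.
Proof. exact/sqrt_sqrt/inner_ge0. Qed.

Lemma Rabs_coord_le u i : Rabs (u i) <= vnorm u.
Proof. by rewrite /vnorm -sqrt_Rsqr_abs; apply/sqrt_le_1_alt/sqr_coord_le. Qed.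

Lemma vnorm_le_coord u e : 0 <= e -> (forall i, Rabs (u i) <= e) -> vnorm u <= sqrt (INR n) * e.
Proof.
move=> He H.
rewrite -(sqrt_square e) // -sqrt_mult; [|exact: pos_INR|exact: Rmult_le_pos].
apply: sqrt_le_1_alt.
have -> : INR n * (e * e) = \big[Rplus/0]_(i < n) (e * e).
  elim: n {u H} => [|m IH]; first by rewrite big_ord0 /=; ring.
  by rewrite big_ord_recr -IH S_INR /=; ring.
apply: (big_ind2 (fun a b => a <= b)) => [|a b c d|i _]; [lra|lra|].
have -> : u i * u i = Rabs (u i) * Rabs (u i).
  by rewrite -Rabs_mult Rabs_pos_eq //; apply: Rle_0_sqr.
have := H i; have := Rabs_pos (u i); nra.
Qed.

Lemma inner_eq0_r u v : inner v v = 0 -> inner u v = 0.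
Proof.
move=> Hv; rewrite /inner big1 // => i _.
have := sqr_coord_le v i; have := Rle_0_sqr (v i); rewrite /Rsqr Hv => h1 h2.
have -> : v i = 0 by nra.
ring.
Qed.

Lemma Cauchy_Schwarz u v : Rabs (inner u v) <= vnorm u * vnorm v.
Proof.
have Hsq : inner u v * inner u v <= inner u u * inner v v.
  have := inner_ge0 v; have := inner_ge0 u.
  have [Hv _ _|Hv Hu Hv'] := Req_dec (inner v v) 0.
    rewrite (inner_eq0_r u v Hv) Hv; lra.
  (* 0 <= |<v,v> u - <u,v> v|^2 = <v,v> (<u,u> <v,v> - <u,v>^2) *)
  have := inner_ge0 (vsub (vscale (inner v v) u) (vscale (inner u v) v)).
  rewrite !(inner_subl, inner_subr, inner_scalel, inner_scaler) (inner_sym v u).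
  have Hc : 0 < inner v v by lra.
  nra.
rewrite /vnorm -sqrt_mult; [|exact: inner_ge0|exact: inner_ge0].
rewrite -sqrt_Rsqr_abs; exact: sqrt_le_1_alt.
Qed.

Lemma vnorm_add_le u v : vnorm (vadd u v) <= vnorm u + vnorm v.
Proof.
apply: Rsqr_incr_0_var; last by have := vnorm_ge0 u; have := vnorm_ge0 v; lra.
rewrite /Rsqr vnorm_sqr inner_addl !inner_addr (inner_sym v u).
have := Cauchy_Schwarz u v; have := Rle_abs (inner u v).
have := vnorm_sqr u; have := vnorm_sqr v; nra.
Qed.

Lemma vnorm_scale a u : vnorm (vscale a u) = Rabs a * vnorm u.
Proof.
rewrite /vnorm inner_scalel inner_scaler -Rmult_assoc -sqrt_Rsqr_abs.
by rewrite -sqrt_mult //; [apply: Rle_0_sqr | apply: inner_ge0].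
Qed.

Lemma vnorm_opp_sub u v : vnorm (vsub u v) = vnorm (vsub v u).
Proof.
have -> : vsub u v = vscale (-1) (vsub v u).
  by apply: functional_extensionality => i; rewrite /vsub /vscale; ring.
by rewrite vnorm_scale Rabs_Ropp Rabs_R1 Rmult_1_l.
Qed.

Lemma vnorm_sub_le u v : vnorm (vsub u v) <= vnorm u + vnorm v.
Proof.
rewrite vsubE; apply: Rle_trans (vnorm_add_le _ _) _.
by rewrite vnorm_scale Rabs_Ropp Rabs_R1; lra.
Qed.

Lemma vnorm_sub_trans u v w : vnorm (vsub u w) <= vnorm (vsub u v) + vnorm (vsub v w).
Proof.
have -> : vsub u w = vadd (vsub u v) (vsub v w).
  by apply: functional_extensionality => i; rewrite /vsub /vadd; ring.
exact: vnorm_add_le.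
Qed.

Lemma inner_sub_sub_le a b u v z :
  Rabs (inner a (vsub z u) - inner b (vsub z v)) <=
  vnorm (vsub a b) * vnorm (vsub z u) + vnorm b * vnorm (vsub u v).
Proof.
have -> : inner a (vsub z u) - inner b (vsub z v) =
          inner (vsub a b) (vsub z u) + inner b (vsub v u).
  by rewrite !(inner_subl, inner_subr); ring.
apply: Rle_trans (Rabs_triang _ _) _; rewrite (vnorm_opp_sub u v).
by apply: Rplus_le_compat; apply: Cauchy_Schwarz.
Qed.

End VectorAlgebra.

Lemma Rmult_lt_of_lt_div a b c : 0 < b -> a < c / b -> b * a < c.
Proof.
move=> Hb H; have E : b * (c / b) = c by field; lra.
by rewrite -E; apply: Rmult_lt_compat_l.
Qed.

Lemma inv_INR_succ_lt {eps} : 0 < eps -> exists N, forall j, (N <= j)%N -> / INR j.+1 < eps.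
Proof.
move=> He; have [N [HN HN0]] := archimed_cor1 eps He.
exists N => j /leP Hj; apply: Rle_lt_trans HN.
by apply/Rinv_le_contravar/le_INR; [apply: lt_0_INR | lia].
Qed.

Lemma inv_INR_succ_gt0 j : 0 < / INR j.+1.
Proof. exact/Rinv_0_lt_compat/lt_0_INR/Nat.lt_0_succ. Qed.

Lemma nondecreasing_bounded_stable {a : nat -> nat} {L} :
  (forall k, (a k <= a k.+1)%N) -> (forall k, (a k <= L)%N) ->
  exists K, forall k, (K <= k)%N -> a k = a K.
Proof.
move=> Hmono HL; apply: NNPP => Hnot.
have Hup m : exists k, (m <= a k)%N.
  elim: m => [|m [k Hk]]; first by exists 0%N.
  have [k' [Hkk' Hne]] : exists k', (k <= k')%N /\ a k' <> a k.
    apply: NNPP => Hk'; apply: Hnot; exists k => k' Hkk'.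
    by apply: NNPP => Hne; apply: Hk'; exists k'.
  exists k'; have := homo_leq leqnn leq_trans Hmono Hkk'; lia.
by have [k Hk] := Hup L.+1; have := HL k; lia.
Qed.

Lemma nonincreasing_bounded_steps_cv0 (a : nat -> R) m K :
  (forall k, (K <= k)%N -> a k.+1 <= a k) -> (forall k, m <= a k) ->
  Un_cv (fun k => a k - a k.+1) 0.
Proof.
move=> Hdec Hlb.
have Hdecr : Un_decreasing (fun j => a (j + K)%N).
  by move=> j; rewrite addSn; apply/Hdec/leq_addl.
have Hb : has_lb (fun j => a (j + K)%N).
  by exists (- m) => _ [j ->]; rewrite /opp_seq; have := Hlb (j + K)%N; lra.
have [l Hl] := decreasing_cv _ Hdecr Hb.
apply: (CV_shift _ K); have := CV_minus _ _ _ _ Hl (CV_shift' _ 1 _ Hl).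
rewrite Rminus_diag; apply: Un_cv_ext => j; do 2 f_equal; lia.
Qed.

(* The subsequences below are given by index maps [psi] with [j <= psi j]; they
   need not be increasing, which makes extracting them a plain use of choice. *)
Lemma limit_point_reindex {n} {s : nat -> vec n} {psi : nat -> nat} {l} :
  (forall j, (j <= psi j)%N) -> limit_point (fun j => s (psi j)) l -> limit_point s l.
Proof.
move=> Hpsi Hl eps He N; have [j [Hj Hjl]] := Hl eps He N.
by exists (psi j); split => //; apply: leq_trans (Hpsi j).
Qed.

Lemma bounded_seq_cv_reindex (a : nat -> R) M : (forall j, Rabs (a j) <= M) ->
  exists psi c, (forall j, (j <= psi j)%N) /\ Un_cv (fun j => a (psi j)) c.
Proof.
move=> HM.
have [c Hc] : exists c, ValAdh a c.
  apply: (Bolzano_Weierstrass _ (fun c => - M <= c <= M)); first exact: compact_P3.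
  move=> j; have := HM j; have := Rle_abs (- a j); rewrite Rabs_Ropp.
  have := Rle_abs (a j); lra.
have [psi Hpsi] : exists psi, forall j, (j <= psi j)%N /\ Rabs (a (psi j) - c) < / INR j.+1.
  apply: (choice (fun j p => (j <= p)%N /\ Rabs (a p - c) < / INR j.+1)) => j.
  have [|p [/leP Hp Hpc]] := Hc (fun r => Rabs (r - c) < / INR j.+1) j.
    by exists (mkposreal _ (inv_INR_succ_gt0 j)).
  by exists p.
exists psi, c; split=> [j|eps He]; first exact: (proj1 (Hpsi j)).
have [N HN] := inv_INR_succ_lt He.
exists N => j /leP Hj; apply: Rlt_trans (proj2 (Hpsi j)) (HN j Hj).
Qed.

Lemma bounded_vec_limit_point {n} {s : nat -> vec n} {M} :
  (forall j, vnorm (s j) <= M) -> exists l, limit_point s l.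
Proof.
move=> HM.
(* induction on m: a subsequence converging uniformly in the coordinates i < m *)
have Hcoord m : exists psi (l : vec n), (forall j, (j <= psi j)%N) /\
    forall eps, 0 < eps -> exists N, forall j, (N <= j)%N ->
      forall i : 'I_n, (i < m)%N -> Rabs (s (psi j) i - l i) < eps.
  elim: m => [|m [psi [l [Hpsi Hl]]]].
    by exists id, (s 0%N); split=> // eps _; exists 0%N.
  case: (ltnP m n) => [Hmn|Hnm]; last first.
    exists psi, l; split => // eps /Hl [N HN]; exists N => j Hj i Hi.
    by apply: HN => //; have := ltn_ord i; lia.
  pose i0 := Ordinal Hmn.
  have [phi [c [Hphi Hc]]] := @bounded_seq_cv_reindex (fun j => s (psi j) i0) M
    (fun j => Rle_trans _ _ _ (Rabs_coord_le _ i0) (HM _)).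
  exists (fun j => psi (phi j)), (fun i => if nat_of_ord i == m then c else l i).
  split=> [j|eps He]; first exact: leq_trans (Hphi j) (Hpsi _).
  have [N1 HN1] := Hl eps He; have [N2 HN2] := Hc eps He.
  exists (maxn N1 N2) => j Hj i Hi.
  case: eqP => [Him|Him].
    have -> : i = i0 by apply: ord_inj.
    by apply: HN2; apply/leP; lia.
  by apply: HN1; [have := Hphi j; lia | lia].
have [psi [l [Hpsi Hl]]] := Hcoord n.
exists l; apply: (limit_point_reindex Hpsi) => eps He N0.
have Hn := sqrt_pos (INR n).
have He' : 0 < eps / (sqrt (INR n) + 1) by apply: Rdiv_lt_0_compat; lra.
have [N HN] := Hl _ He'.
exists (maxn N N0); split; first lia.
apply: Rle_lt_trans (vnorm_le_coord _ _ (Rlt_le _ _ He') _) _.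
  by move=> i; apply/Rlt_le/HN; [lia | exact: ltn_ord].
apply: (Rmult_lt_reg_r (sqrt (INR n) + 1)); first lra.
field_simplify; lra.
Qed.

Definition vcontinuous_at {n} (phi : vec n -> R) (x : vec n) : Prop :=
  forall eps, 0 < eps -> exists delta, 0 < delta /\
    forall y, vnorm (vsub y x) < delta -> Rabs (phi y - phi x) < eps.

Lemma limit_point_ge {n} {phi : vec n -> R} {u : nat -> vec n} {e : nat -> R} {l} c :
  vcontinuous_at phi l -> Un_cv e 0 -> (forall j, c - e j <= phi (u j)) ->
  limit_point u l -> c <= phi l.
Proof.
move=> Hphi He Hu Hl; apply: Rnot_lt_le => Hlt.
have [d [Hd Hd']] := Hphi ((c - phi l) / 2) ltac:(lra).
have [N HN] := He ((c - phi l) / 2) ltac:(lra).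
have [j [/leP Hj Hjl]] := Hl d Hd N.
have := HN j Hj; have := Hd' _ Hjl; have := Hu j; rewrite /R_dist Rminus_0_r.
have := Rle_abs (e j); have := Rle_abs (phi (u j) - phi l); lra.
Qed.

Lemma limit_point_value {n} {phi : vec n -> R} {u : nat -> vec n} {l} L :
  vcontinuous_at phi l -> Un_cv (fun j => phi (u j)) L -> limit_point u l -> phi l = L.
Proof.
move=> Hphi HL Hl; apply: NNPP => Hne.
have He : 0 < Rabs (phi l - L) / 2 by apply: Rdiv_lt_0_compat; [apply: Rabs_pos_lt | ]; lra.
have [d [Hd Hd']] := Hphi _ He; have [N HN] := HL _ He.
have [j [/leP Hj Hjl]] := Hl d Hd N.
have := HN j Hj; have := Hd' _ Hjl; rewrite /R_dist.
have := Rabs_triang (phi l - phi (u j)) (phi (u j) - L).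
rewrite (Rabs_minus_sym (phi l)) (_ : phi l - phi (u j) + (phi (u j) - L) = phi l - L); lra.
Qed.

Section Differentiable.
Variables (n : nat) (f : vec n -> R) (g : vec n -> vec n).
Hypothesis f_grad : has_gradient f g.

Lemma has_gradient_continuous x : vcontinuous_at f x.
Proof.
move=> eps He; have [d1 [Hd1 H1]] := f_grad x 1 Rlt_0_1.
have Hg := vnorm_ge0 (g x).
exists (Rmin d1 (eps / (vnorm (g x) + 1))); split.
  by apply: Rmin_pos => //; apply: Rdiv_lt_0_compat; lra.
move=> y Hy; have := H1 y (Rlt_le_trans _ _ _ Hy (Rmin_l _ _)).
have := Cauchy_Schwarz (g x) (vsub y x); have := vnorm_ge0 (vsub y x).
have : (vnorm (g x) + 1) * vnorm (vsub y x) < eps.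
  by apply/Rmult_lt_of_lt_div; [lra | exact: Rlt_le_trans Hy (Rmin_r _ _)].
have := Rabs_triang_inv (f y - f x) (inner (g x) (vsub y x)).
nra.
Qed.

Lemma has_gradient_segment x d t :
  derivable_pt_lim (fun s => f (vadd x (vscale s d))) t (inner (g (vadd x (vscale t d))) d).
Proof.
move=> eps He.
set p := vadd x (vscale t d); set L := inner (g p) d.
have Hd := vnorm_ge0 d.
have Hk : 0 < eps / 2 / (vnorm d + 1) by apply: Rdiv_lt_0_compat; lra.
have Ek : eps / 2 / (vnorm d + 1) * (vnorm d + 1) = eps / 2 by field; lra.
have [del [Hdel Hp]] := f_grad p _ Hk.
have Hdel' : 0 < del / (vnorm d + 1) by apply: Rdiv_lt_0_compat; lra.
exists (mkposreal _ Hdel') => h Hh0 /= Hh.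
have Hha : 0 < Rabs h by apply: Rabs_pos_lt.
have Hstep : vsub (vadd x (vscale (t + h) d)) p = vscale h d.
  by apply: functional_extensionality => i; rewrite /p /vsub /vadd /vscale; ring.
have Hhd : (vnorm d + 1) * Rabs h < del by apply: Rmult_lt_of_lt_div; lra.
have := Hp (vadd x (vscale (t + h) d)); rewrite Hstep vnorm_scale inner_scaler -/L.
move=> /(_ ltac:(nra)) Hlin.
have -> : (f (vadd x (vscale (t + h) d)) - f p) / h - L =
          (f (vadd x (vscale (t + h) d)) - f p - h * L) * / h by field.
rewrite Rabs_mult Rabs_inv.
apply: (Rmult_lt_reg_r (Rabs h)) => //; rewrite Rmult_assoc Rinv_l; nra.
Qed.

Lemma mean_value_segment x d lam : 0 < lam -> exists t, 0 < t < lam /\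
  f (vadd x (vscale lam d)) - f x = lam * inner (g (vadd x (vscale t d))) d.
Proof.
move=> Hl.
have [t [Ht1 Ht2]] := MVT_cor2 _ _ 0 lam Hl (fun t _ => has_gradient_segment x d t).
exists t; split => //.
have Ex : vadd x (vscale 0 d) = x.
  by apply: functional_extensionality => i; rewrite /vadd /vscale; ring.
by rewrite -{2}Ex Ht1; ring.
Qed.

End Differentiable.

Arguments has_gradient_continuous {n f g}.
Arguments mean_value_segment {n f g}.

Lemma inner_gap_continuous {n} {g : vec n -> vec n} z l : continuous_map g ->
  vcontinuous_at (fun u => inner (g u) (vsub z u)) l.
Proof.
move=> g_cont eps He.
have Hz := vnorm_ge0 (vsub z l); have Hg := vnorm_ge0 (g l).
have [d1 [Hd1 Hgl]] :=
  g_cont l (eps / 2 / (vnorm (vsub z l) + 1)) ltac:(apply: Rdiv_lt_0_compat; lra).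
exists (Rmin (Rmin d1 1) (eps / 2 / (vnorm (g l) + 1))); split.
  by apply: Rmin_pos; [apply: Rmin_pos; lra | apply: Rdiv_lt_0_compat; lra].
move=> u Hu.
have Hu1 : vnorm (vsub u l) < d1.
  by apply: (Rlt_le_trans _ _ _ Hu); apply: Rle_trans (Rmin_l _ _) (Rmin_l _ _).
have Hu2 : vnorm (vsub u l) < 1.
  by apply: (Rlt_le_trans _ _ _ Hu); apply: Rle_trans (Rmin_l _ _) (Rmin_r _ _).
have Hu3 : (vnorm (g l) + 1) * vnorm (vsub u l) < eps / 2.
  by apply: Rmult_lt_of_lt_div; [lra | apply: Rlt_le_trans Hu (Rmin_r _ _)].
have Hzu : vnorm (vsub z u) <= vnorm (vsub z l) + 1.
  have := vnorm_sub_trans z l u; rewrite (vnorm_opp_sub l u); lra.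
have Hgu : (vnorm (vsub z l) + 1) * vnorm (vsub (g u) (g l)) < eps / 2.
  by apply: Rmult_lt_of_lt_div; [lra | exact: Hgl].
apply: Rle_lt_trans (inner_sub_sub_le _ _ _ _ _) _.
have := vnorm_ge0 (vsub (g u) (g l)); have := vnorm_ge0 (vsub u l); nra.
Qed.

Definition approx_stationary {n} (D : vec n -> Prop) (g : vec n -> vec n) (e : R)
    (u : vec n) : Prop :=
  D u /\ forall z, D z -> - e <= inner (g u) (vsub z u).

Lemma approx_stationary_mono {n} {D : vec n -> Prop} {g e e' u} :
  e <= e' -> approx_stationary D g e u -> approx_stationary D g e' u.
Proof. by move=> Hee' [Du Hu]; split => // z Dz; have := Hu z Dz; lra. Qed.

Lemma stationary_minimizer {n} {D : vec n -> Prop} {f g xs} :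
  pseudo_convex_on D f g -> stationary D g xs -> minimizer D f xs.
Proof. by move=> Hpc [Dxs Hxs]; split => // z Dz; apply: Hpc => //; apply: Hxs. Qed.

Lemma minimizer_is_inf {n} {D : vec n -> Prop} {f xm} : minimizer D f xm -> is_inf_on D f (f xm).
Proof. by move=> [Dxm Hxm]; split => // m Hm; apply: Hm. Qed.

Section CompactDomain.
Variables (n : nat) (D : vec n -> Prop) (M : R).
Hypothesis D_closed : vclosed D.
Hypothesis D_bounded : forall {z}, D z -> vnorm z <= M.

Lemma limit_point_in {s : nat -> vec n} {l} : (forall j, D (s j)) -> limit_point s l -> D l.
Proof.
move=> Ds Hl; apply: NNPP => Hnl.
have [eps [He Hball]] := D_closed l Hnl.
have [k [_ Hk]] := Hl eps He 0%N.
exact: Hball _ Hk (Ds k).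
Qed.

Lemma exists_limit_point_in {s : nat -> vec n} : (forall j, D (s j)) ->
  exists l, D l /\ limit_point s l.
Proof.
move=> Ds; have [l Hl] := bounded_vec_limit_point (fun j => D_bounded (Ds j)).
by exists l; split => //; exact: limit_point_in Ds Hl.
Qed.

Lemma vnorm_sub_in_le {u v} : D u -> D v -> vnorm (vsub u v) <= 2 * M.
Proof.
move=> Du Dv; apply: Rle_trans (vnorm_sub_le u v) _.
by have := D_bounded Du; have := D_bounded Dv; lra.
Qed.

Section Smooth.
Variables (f : vec n -> R) (g : vec n -> vec n).
Hypothesis f_grad : has_gradient f g.
Hypothesis g_cont : continuous_map g.

Lemma continuous_map_unif_in eps : 0 < eps -> exists delta, 0 < delta /\
  forall u v, D u -> D v -> vnorm (vsub u v) < delta -> vnorm (vsub (g u) (g v)) < eps.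
Proof.
move=> He; apply: NNPP => Hnot.
have [uv Huv] : exists uv : nat -> vec n * vec n, forall j,
    D (uv j).1 /\ D (uv j).2 /\ vnorm (vsub (uv j).1 (uv j).2) < / INR j.+1 /\
    eps <= vnorm (vsub (g (uv j).1) (g (uv j).2)).
  apply: (choice (fun j p => D p.1 /\ D p.2 /\ vnorm (vsub p.1 p.2) < / INR j.+1 /\
    eps <= vnorm (vsub (g p.1) (g p.2)))) => j.
  apply: NNPP => Hj; apply: Hnot; exists (/ INR j.+1); split; first exact: inv_INR_succ_gt0.
  move=> u v Du Dv Huv; apply: Rnot_le_lt => Hle; apply: Hj; by exists (u, v).
have [l [_ Hl]] := exists_limit_point_in (fun j => proj1 (Huv j)).
have [d [Hd Hgl]] := g_cont l (eps / 2) ltac:(lra).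
have [N HN] := @inv_INR_succ_lt (d / 2) ltac:(lra).
have [j [Hj Hjl]] := Hl (d / 2) ltac:(lra) N.
have [_ [_ [Hclose Hfar]]] := Huv j.
have := HN j Hj; have := vnorm_sub_trans (uv j).2 (uv j).1 l.
rewrite (vnorm_opp_sub (uv j).2 (uv j).1) => Htri Hsmall.
have := Hgl (uv j).1 ltac:(lra); have := Hgl (uv j).2 ltac:(lra).
have := vnorm_sub_trans (g (uv j).1) (g l) (g (uv j).2).
rewrite (vnorm_opp_sub (g l) (g (uv j).2)); lra.
Qed.

Lemma stationary_of_limit_point {u : nat -> vec n} {e : nat -> R} {l} :
  (forall j, approx_stationary D g (e j) (u j)) -> Un_cv e 0 -> limit_point u l ->
  stationary D g l.
Proof.
move=> Hu He Hl; split; first exact: limit_point_in (fun j => proj1 (Hu j)) Hl.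
move=> z Dz; apply: (limit_point_ge 0 (inner_gap_continuous z l g_cont) He _ Hl).
by move=> j; rewrite Rminus_0_l; apply: (proj2 (Hu j)).
Qed.

Lemma bounded_below_in : exists m, forall z, D z -> m <= f z.
Proof.
apply: NNPP => Hnot.
have [u Hu] : exists u : nat -> vec n, forall j, D (u j) /\ f (u j) < - INR j.
  apply: (choice (fun j v => D v /\ f v < - INR j)) => j.
  apply: NNPP => Hj; apply: Hnot; exists (- INR j) => z Dz.
  by apply: Rnot_lt_le => Hz; apply: Hj; exists z.
have [l [_ Hl]] := exists_limit_point_in (fun j => proj1 (Hu j)).
have [d [Hd Hfl]] := has_gradient_continuous f_grad l 1 Rlt_0_1.
have [N HN] := INR_unbounded (1 - f l).
have [j [/leP Hj Hjl]] := Hl d Hd N.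
have := Hfl _ Hjl; have := proj2 (Hu j); have := le_INR _ _ Hj.
have := Rle_abs (f (u j) - f l); rewrite Rabs_minus_sym; have := Rle_abs (f l - f (u j)); lra.
Qed.

Lemma approx_stationary_value_le {xm} : pseudo_convex_on D f g -> minimizer D f xm ->
  forall eps, 0 < eps -> exists eta, 0 < eta /\
    forall u, approx_stationary D g eta u -> f u <= f xm + eps.
Proof.
move=> Hpc [Dxm Hxm] eps He; apply: NNPP => Hnot.
have [u Hu] : exists u : nat -> vec n, forall j,
    approx_stationary D g (/ INR j.+1) (u j) /\ f xm + eps < f (u j).
  apply: (choice (fun j v => approx_stationary D g (/ INR j.+1) v /\ f xm + eps < f v)) => j.
  apply: NNPP => Hj; apply: Hnot; exists (/ INR j.+1); split; first exact: inv_INR_succ_gt0.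
  by move=> v Hv; apply: Rnot_lt_le => Hlt; apply: Hj; exists v.
have [l [_ Hl]] := exists_limit_point_in (fun j => proj1 (proj1 (Hu j))).
have Hinv : Un_cv (fun j => / INR j.+1) 0.
  move=> e /inv_INR_succ_lt [N HN]; exists N => j /leP Hj.
  by rewrite /R_dist Rminus_0_r Rabs_pos_eq; [exact: HN | exact/Rlt_le/inv_INR_succ_gt0].
have Hst := stationary_of_limit_point (fun j => proj1 (Hu j)) Hinv Hl.
have Hfl : f l <= f xm by apply: (stationary_minimizer Hpc Hst).2.
have : f xm + eps <= f l.
  apply: (limit_point_ge _ (has_gradient_continuous f_grad l) Hinv _ Hl) => j.
  by have := proj2 (Hu j); have := inv_INR_succ_gt0 j; lra.
lra.
Qed.

Lemma limit_point_minimizer {s : nat -> vec n} {xm l} : minimizer D f xm ->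
  (forall k, D (s k)) -> Un_cv (fun k => f (s k)) (f xm) -> limit_point s l -> minimizer D f l.
Proof.
move=> [Dxm Hxm] Ds Hcv Hl; split; first exact: limit_point_in Ds Hl.
by move=> z Dz; rewrite (limit_point_value _ (has_gradient_continuous f_grad l) Hcv Hl); apply: Hxm.
Qed.

Section CGMS.
Variables (beta : R) (tau : nat -> R).
Variables (x y : nat -> vec n) (lam : nat -> R) (lidx : nat -> nat).
Hypothesis D_convex : vconvex D.
Hypothesis M_gt0 : 0 < M.
Hypothesis beta_in : 0 < beta < 1.
Hypothesis tau_in : forall l, 0 < tau l < 1.
Hypothesis tau_cv0 : Un_cv tau 0.
Hypothesis run : CGMS_run D f g beta tau x y lam lidx.

Definition slope k := inner (g (x k)) (vsub (y k) (x k)).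
Definition armijo k := f (x k.+1) <= f (x k) + beta * lam k * slope k.

Lemma run_step k : in_Z D g (x k) (y k) /\ slope k <> 0 /\
  x k.+1 = vadd (x k) (vscale (lam k) (vsub (y k) (x k))) /\
  (armijo k -> lidx k.+1 = lidx k /\ lam k <= lam k.+1 <= tau (lidx k)) /\
  (~ armijo k -> lidx k.+1 = (lidx k).+1 /\ 0 < lam k.+1 <= Rmin (lam k) (tau (lidx k).+1)).
Proof. by case: run => _ [_ [_ H]]; apply: H. Qed.

Lemma run_invariant k : D (x k) /\ 0 < lam k <= tau (lidx k).
Proof.
elim: k => [|k [Dk Hlam]].
  by case: run => D0 [-> [Hlam _]].
have [[Dy _] [_ [-> [Hs Hf]]]] := run_step k.
have := tau_in (lidx k); split; first by apply: D_convex => //; lra.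
case: (classic (armijo k)) => [/Hs|/Hf] [-> Hk]; first lra.
by split; [lra | exact: Rle_trans (proj2 Hk) (Rmin_r _ _)].
Qed.

Lemma iterate_in k : D (x k).
Proof. exact: (run_invariant k).1. Qed.

Lemma lam_gt0 k : 0 < lam k.
Proof. exact: (run_invariant k).2.1. Qed.

Lemma lam_lt1 k : lam k < 1.
Proof. by have := (run_invariant k).2.2; have := tau_in (lidx k); lra. Qed.

Lemma iterate_approx_stationary k : approx_stationary D g (- slope k) (x k).
Proof.
have [[_ Hmin] _] := run_step k; split => [|z Dz]; first exact: iterate_in.
by rewrite Ropp_involutive /slope !inner_subr; have := Hmin z Dz; lra.
Qed.

Lemma slope_lt0 k : slope k < 0.
Proof.
have := (iterate_approx_stationary k).2 _ (iterate_in k).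
rewrite inner_subr Rminus_diag; have [_ [Hk _]] := run_step k; lra.
Qed.

Lemma armijo_value_le {k} : armijo k -> f (x k.+1) <= f (x k).
Proof.
rewrite /armijo => Hk; have := slope_lt0 k; have := lam_gt0 k.
have := Rmult_lt_0_compat _ _ (proj1 beta_in) (lam_gt0 k); nra.
Qed.

Lemma lidx_le_succ k : (lidx k <= lidx k.+1)%N.
Proof.
have [_ [_ [_ [Hs Hf]]]] := run_step k.
by case: (classic (armijo k)) => [/Hs|/Hf] [-> _].
Qed.

(* The mean value theorem along [x^k + t d^k] and the uniform continuity of the
   gradient on [D] make the linearization [lam_k * slope_k] accurate, uniformly in k. *)
Lemma small_step_value_le eps : 0 < eps -> exists delta, 0 < delta /\
  forall k, lam k < delta -> f (x k.+1) - f (x k) <= lam k * (slope k + eps).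
Proof.
move=> He.
have [d0 [Hd0 Hunif]] := continuous_map_unif_in (eps / (2 * M))
  ltac:(apply: Rdiv_lt_0_compat; lra).
exists (d0 / (2 * M)); split=> [|k Hk]; first by apply: Rdiv_lt_0_compat; lra.
have [[Dy _] [_ [-> _]]] := run_step k.
set d := vsub (y k) (x k).
have [t [Ht ->]] := mean_value_segment f_grad (x k) d (lam k) (lam_gt0 k).
set xi := vadd (x k) (vscale t d).
have Hlam := lam_lt1 k.
have Dxi : D xi by apply: D_convex; [exact: iterate_in | exact: Dy | lra].
have Hd : vnorm d <= 2 * M := vnorm_sub_in_le Dy (iterate_in k).
have Hclose : vnorm (vsub xi (x k)) < d0.
  have -> : vsub xi (x k) = vscale t d.
    by apply: functional_extensionality => i; rewrite /xi /vsub /vadd /vscale; ring.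
  rewrite vnorm_scale Rabs_pos_eq; last lra.
  have : 2 * M * lam k < d0 by apply: Rmult_lt_of_lt_div; lra.
  have := vnorm_ge0 d; nra.
have Hg := Hunif _ _ Dxi (iterate_in k) Hclose.
have Hr : inner (g xi) d - slope k <= eps.
  rewrite /slope -/d -inner_subl.
  apply: Rle_trans (Rle_abs _) _; apply: Rle_trans (Cauchy_Schwarz _ _) _.
  have -> : eps = eps / (2 * M) * (2 * M) by field; lra.
  by apply: Rmult_le_compat; try apply: vnorm_ge0; lra.
by apply: Rmult_le_compat_l; [exact/Rlt_le/lam_gt0 | lra].
Qed.

Lemma lidx_nondecreasing {i j} : (i <= j)%N -> (lidx i <= lidx j)%N.
Proof. exact: homo_leq leqnn leq_trans lidx_le_succ i j. Qed.

Lemma armijo_eventually : (exists L, forall k, (lidx k <= L)%N) ->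
  exists K, forall k, (K <= k)%N -> armijo k /\ lam K <= lam k.
Proof.
move=> [L HL]; have [K HK] := nondecreasing_bounded_stable lidx_le_succ HL.
have Harm k : (K <= k)%N -> armijo k.
  move=> Hk; apply: NNPP => Hfail; have [_ [_ [_ [_ /(_ Hfail) [Hl _]]]]] := run_step k.
  by move: Hl; rewrite (HK _ (leqW Hk)) (HK _ Hk); lia.
have Hlam m : lam K <= lam (K + m)%N.
  elim: m => [|m IH]; first by rewrite addn0; lra.
  have [_ [_ [_ [/(_ (Harm _ (leq_addr m K))) [_ [Hle _]] _]]]] := run_step (K + m)%N.
  by rewrite addnS; lra.
by exists K => k Hk; split; [exact: Harm | rewrite -(subnKC Hk)].
Qed.

(* With a step size bounded away from 0, the Armijo decreases are summable. *)
Lemma slope_cv0_of_bounded_lidx : (exists L, forall k, (lidx k <= L)%N) -> Un_cv slope 0.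
Proof.
move=> /armijo_eventually [K HK]; have [m Hm] := bounded_below_in.
have Hsteps := nonincreasing_bounded_steps_cv0 (fun k => f (x k)) m K
  (fun k Hk => armijo_value_le (HK k Hk).1) (fun k => Hm _ (iterate_in k)).
have Hc := Rmult_lt_0_compat _ _ (proj1 beta_in) (lam_gt0 K).
move=> eps He; have [N HN] := Hsteps (beta * lam K * eps) (Rmult_lt_0_compat _ _ Hc He).
exists (maxn N K) => k /leP Hk.
have [Harm Hlam] := HK k ltac:(lia); have := HN k ltac:(lia); rewrite /armijo in Harm.
rewrite /R_dist !Rminus_0_r => Hdec; have Hs := slope_lt0 k; rewrite Rabs_left //.
have : beta * lam K * (- slope k) <= beta * lam k * (- slope k).
  by apply: Rmult_le_compat_r; [lra | apply: Rmult_le_compat_l; lra].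
move=> Hmono; apply: (Rmult_lt_reg_l (beta * lam K)) => //.
by have := Rle_abs (f (x k) - f (x k.+1)); lra.
Qed.

Lemma lam_cv0_of_unbounded_lidx : ~ (exists L, forall k, (lidx k <= L)%N) -> Un_cv lam 0.
Proof.
move=> Hunb eps He; have [N HN] := tau_cv0 eps He.
have [K HK] : exists K, (N <= lidx K)%N.
  apply: NNPP => Hn; apply: Hunb; exists N => k.
  by apply: NNPP => Hk; apply: Hn; exists k; lia.
exists K => k /leP Hk; have := HN (lidx k) (leP (leq_trans HK (lidx_nondecreasing Hk))).
have := tau_in (lidx k); have := (run_invariant k).2 => Hlam Htau.
by rewrite /R_dist !Rminus_0_r !Rabs_pos_eq; lra.
Qed.

Lemma armijo_fails_often : ~ (exists L, forall k, (lidx k <= L)%N) ->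
  exists psi, forall j, (j <= psi j)%N /\ ~ armijo (psi j).
Proof.
move=> Hunb; apply: (choice (fun j p => (j <= p)%N /\ ~ armijo p)) => N.
apply: NNPP => Hn; apply: Hunb; exists (lidx N) => k.
case: (leqP N k) => Hk; last exact/lidx_nondecreasing/ltnW.
have Hconst m : lidx (N + m)%N = lidx N.
  elim: m => [|m IH]; first by rewrite addn0.
  have Harm : armijo (N + m)%N.
    by apply: NNPP => Hfail; apply: Hn; exists (N + m)%N; split => //; apply: leq_addr.
  have [_ [_ [_ [/(_ Harm) [Hl _] _]]]] := run_step (N + m)%N.
  by rewrite addnS Hl.
by rewrite -(subnKC Hk) Hconst.
Qed.

Lemma armijo_fail_slope_lt {eps} : 0 < eps -> exists delta, 0 < delta /\
  forall k, lam k < delta -> ~ armijo k -> - slope k < eps.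
Proof.
move=> He; have [delta [Hdelta Hstep]] := small_step_value_le ((1 - beta) * eps)
  ltac:(apply: Rmult_lt_0_compat; lra).
exists delta; split => // k Hk /Rnot_le_lt Hfail; have := Hstep k Hk => Hk'.
have : beta * slope k < slope k + (1 - beta) * eps.
  by apply: (Rmult_lt_reg_l (lam k)); [exact: lam_gt0 | lra].
nra.
Qed.

Lemma slope_subseq_cv0 :
  exists psi, (forall j, (j <= psi j)%N) /\ Un_cv (fun j => slope (psi j)) 0.
Proof.
case: (classic (exists L, forall k, (lidx k <= L)%N)) => Hb.
  by exists id; split => //; exact: slope_cv0_of_bounded_lidx.
have [psi Hpsi] := armijo_fails_often Hb.
exists psi; split => [j|eps He]; first exact: (Hpsi j).1.
have [delta [Hdelta Hfail]] := armijo_fail_slope_lt He.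
have [N HN] := lam_cv0_of_unbounded_lidx Hb delta Hdelta.
exists N => j /leP Hj; have := HN (psi j) (leP (leq_trans Hj (Hpsi j).1)).
rewrite /R_dist !Rminus_0_r Rabs_pos_eq => [Hlam|]; last exact/Rlt_le/lam_gt0.
rewrite Rabs_left; [exact: Hfail Hlam (Hpsi j).2 | exact: slope_lt0].
Qed.

Lemma cgms_stationary_limit_point : exists xs, limit_point x xs /\ stationary D g xs.
Proof.
have [psi [Hpsi Hcv]] := slope_subseq_cv0.
have [xs [_ Hxs]] := exists_limit_point_in (fun j => iterate_in (psi j)).
exists xs; split; first exact: limit_point_reindex Hpsi Hxs.
apply: (stationary_of_limit_point (fun j => iterate_approx_stationary (psi j))) Hxs.
by rewrite -Ropp_0; apply: CV_opp.
Qed.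

Lemma cgms_value_cv xm : pseudo_convex_on D f g -> minimizer D f xm ->
  Un_cv (fun k => f (x k)) (f xm).
Proof.
move=> Hpc Hxm.
suff Hup eps : 0 < eps -> exists N, forall k, (N <= k)%N -> f (x k) <= f xm + eps.
  move=> eps He; have [N HN] := Hup (eps / 2) ltac:(lra); exists N => k /leP Hk.
  have := HN k Hk; have := Hxm.2 _ (iterate_in k) => Hlow Hhigh.
  by rewrite /R_dist Rabs_pos_eq; lra.
move=> He.
have [eta [Heta Hnear]] := approx_stationary_value_le Hpc Hxm (eps / 2) ltac:(lra).
have Hnear' k : - slope k <= eta -> f (x k) <= f xm + eps / 2.
  by move=> Hk; apply/Hnear/(approx_stationary_mono Hk)/iterate_approx_stationary.
case: (classic (exists L, forall k, (lidx k <= L)%N)) => Hb.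
  have [N HN] := slope_cv0_of_bounded_lidx Hb eta Heta.
  exists N => k /leP Hk; have := HN k Hk; rewrite /R_dist Rminus_0_r.
  by have := Rle_abs (- slope k); rewrite Rabs_Ropp => h1 h2; have := Hnear' k; lra.
(* once the step sizes are small, a failed Armijo test happens only at a
   near-optimal point and the step then increases [f] by little *)
have [d1 [Hd1 Hfail]] := armijo_fail_slope_lt Heta.
have [d2 [Hd2 Hstep]] := small_step_value_le (eps / 2) ltac:(lra).
have [N HN] := lam_cv0_of_unbounded_lidx Hb (Rmin d1 d2) (Rmin_pos _ _ Hd1 Hd2).
have Hnext k : (N <= k)%N -> (armijo k -> f (x k) <= f xm + eps) ->
    f (x k.+1) <= f xm + eps.
  move=> /leP Hk IH; have := HN k Hk; rewrite /R_dist Rminus_0_r Rabs_pos_eq;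
    last exact/Rlt_le/lam_gt0.
  move=> Hlam; case: (classic (armijo k)) => Harm.
    by have := armijo_value_le Harm; have := IH Harm; lra.
  have := Hnear' k (Rlt_le _ _ (Hfail k (Rlt_le_trans _ _ _ Hlam (Rmin_l _ _)) Harm)).
  have := Hstep k (Rlt_le_trans _ _ _ Hlam (Rmin_r _ _)).
  have := slope_lt0 k; have := lam_gt0 k; have := lam_lt1 k; nra.
have [psi Hpsi] := armijo_fails_often Hb.
exists (psi N).+1 => k Hk; rewrite -(subnKC Hk).
elim: (k - (psi N).+1)%N => [|m IH].
  by rewrite addn0; apply: Hnext; [exact: (Hpsi N).1 | move/(Hpsi N).2].
by rewrite addnS; apply: Hnext => [|_ //]; have := (Hpsi N).1; lia.
Qed.

Lemma cgms_limit_point_minimizer xm l : pseudo_convex_on D f g -> minimizer D f xm ->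
  limit_point x l -> minimizer D f l.
Proof.
by move=> Hpc Hxm; apply: limit_point_minimizer Hxm iterate_in (cgms_value_cv _ Hpc Hxm).
Qed.

End CGMS.

End Smooth.
End CompactDomain.

Arguments cgms_stationary_limit_point {n D M} _ _ {f g} _ _ {beta tau x y lam lidx}.
Arguments cgms_value_cv {n D M} _ _ {f g} _ _ {beta tau x y lam lidx}.
Arguments cgms_limit_point_minimizer {n D M} _ _ {f g} _ _ {beta tau x y lam lidx}.

Theorem theorem3p1 (n : nat) (D : vec n -> Prop) (f : vec n -> R) (f' : vec n -> vec n)
    (beta : R) (tau : nat -> R)
    (x y : nat -> vec n) (lam : nat -> R) (lidx : nat -> nat) :
  (exists z : vec n, D z) -> vconvex D -> vclosed D -> vbounded D ->
  C1_with_gradient f f' ->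
  0 < beta < 1 ->
  (forall l, 0 < tau l < 1) -> Un_cv tau 0 ->
  CGMS_run D f f' beta tau x y lam lidx ->
  (exists xs, limit_point x xs /\ stationary D f' xs) /\
  (pseudo_convex_on D f f' ->
     (forall xs, limit_point x xs -> minimizer D f xs) /\
     (exists fstar, is_inf_on D f fstar /\ Un_cv (fun k => f (x k)) fstar)).
Proof.
move=> _ D_convex D_closed [M HM] [f_grad g_cont] beta_in tau_in tau_cv0 run.
have D_bounded z : D z -> vnorm z <= Rabs M + 1 by move/HM; have := Rle_abs M; lra.
have M_gt0 : 0 < Rabs M + 1 by have := Rabs_pos M; lra.
have [xs [Hxs Hst]] := cgms_stationary_limit_point D_closed D_bounded f_grad g_cont
  D_convex M_gt0 beta_in tau_in tau_cv0 run.
split; first by exists xs.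
move=> Hpc; have Hmin := stationary_minimizer Hpc Hst.
split=> [l|].
  exact: (cgms_limit_point_minimizer D_closed D_bounded f_grad g_cont
    D_convex M_gt0 beta_in tau_in tau_cv0 run xs l Hpc Hmin).
exists (f xs); split; first exact: minimizer_is_inf.
exact: (cgms_value_cv D_closed D_bounded f_grad g_cont
  D_convex M_gt0 beta_in tau_in tau_cv0 run xs Hpc Hmin).
Qed.
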